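(* The 1D aTAM is not intrinsically universal: there is no finite 1D tile set $U$ (and temperature $\tau'$) with computable functions $\mathcal{R},S$ such that every 1D aTAM system $\mathcal{T}$ is simulated, at some scale $m$ under $\mathcal{R}(\mathcal{T})$, by the 1D aTAM system $(U,S(\mathcal{T}),\tau')$.
   Context: 1D aTAM: a tile type has a west glue and an east glue, each a pair (finite string label, nonnegative integer strength); a tile set is a finite set of tile types. Assemblies are partial functions $\alpha:\mathbb{Z}\dashrightarrow T$ whose domain is a nonempty interval; adjacent tiles interact if the east glue of the left tile equals the west glue of the right tile with positive strength; $\alpha$ is $\tau$-stable if every cut between consecutive tiles has interaction strength $\ge\tau$. A system $\mathcal{T}=(T,\sigma,\tau)$ has finite $\tau$-stable seed $\sigma$; growth proceeds by single $\tau$-stable tile additions (finite or infinite assembly sequences, result = limit); $\mathcal{A}[\mathcal{T}]$ are the producible assemblies and $\mathcal{A}_\Box[\mathcal{T}]$ the producible ones to which no tile can be added. Simulation: an $m$-block over $S$ is a partial function $\{0,\dots,m-1\}\dashrightarrow S$; $\alpha^m_x$ is $i\mapsto\alpha(mx+i)$. A partial $R$ from $m$-blocks to $T$ is valid if $\alpha\sqsubseteq\beta$, $\alpha\in\mathrm{dom}R$ imply $R(\beta)=R(\alpha)$; $R^*(\alpha')$ is $x\mapsto R(\alpha'^m_x)$. $\alpha'$ maps cleanly if each nonempty block at $x$ has $x$ or $x\pm1$ in $\mathrm{dom}\,R^*(\alpha')$ (or there is at most one nonempty block). $\mathcal{S}$ simulates $\mathcal{T}$ under $R$ if: (i) $R^*$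 maps $\mathcal{A}[\mathcal{S}]$ onto $\mathcal{A}[\mathcal{T}]$ and $\mathcal{A}_\Box[\mathcal{S}]$ onto $\mathcal{A}_\Box[\mathcal{T}]$, all producible assemblies mapping cleanly; (ii) producible $\alpha'\to^\mathcal{S}\beta'$ implies $R^*(\alpha')\to^\mathcal{T}R^*(\beta')$; (iii) for every $\alpha\in\mathcal{A}[\mathcal{T}]$ there is $\Pi\subset\mathcal{A}[\mathcal{S}]$ with $R^*=\alpha$ on $\Pi$ such that for every producible $\beta$ with $\alpha\to^\mathcal{T}\beta$: each $\alpha'\in\Pi$ produces some $\beta'$ with $R^*(\beta')=\beta$, and whenever producible $\alpha''\to^\mathcal{S}\beta'$ with $R^*(\alpha'')=\alpha$, $R^*(\beta')=\beta$, some $\alpha'\in\Pi$ produces $\alpha''$. *)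

From Stdlib Require Import ZArith List String Ascii Arith Cantor.
Import ListNotations.
Open Scope Z_scope.

Definition glue : Type := (string * nat)%type.

Record tile : Type := Tile { west : glue ; east : glue }.

Definition glue_eq_dec : forall g h : glue, {g = h} + {g <> h}.
Proof. decide equality; [apply Nat.eq_dec | apply string_dec]. Defined.

Definition tile_eq_dec : forall s t : tile, {s = t} + {s <> t}.
Proof. decide equality; apply glue_eq_dec. Defined.

Definition tileset : Type := list tile.

Definition asm : Type := Z -> option tile.

Definition is_assembly (a : asm) : Prop :=
  (exists x, a x <> None) /\
  (forall x y z, x <= y <= z -> a x <> None -> a z <> None -> a y <> None).

Definition over (T : tileset) (a : asm) : Prop :=
  forall x t, a x = Some t -> In t T.

Definition aeq (a b : asm) : Prop := forall x, a x = b x.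

(** Interaction strength between a left tile [l] and a right tile [r]:
    the strength of the east glue of [l] if it equals the west glue of [r]
    (a strength-0 match is no interaction, which also gives 0). *)
Definition istrength (l r : tile) : nat :=
  if glue_eq_dec (east l) (west r) then snd (east l) else 0%nat.

Definition stable (tau : nat) (a : asm) : Prop :=
  forall x l r, a x = Some l -> a (x + 1) = Some r -> (tau <= istrength l r)%nat.

(** Finite assemblies given as lists of (position, tile); first entry wins. *)
Definition fasm : Type := list (Z * tile).

Fixpoint fasm_fun (l : fasm) (x : Z) : option tile :=
  match l with
  | [] => None
  | (p, t) :: l' => if Z.eq_dec p x then Some t else fasm_fun l' x
  end.

Record system : Type := Sys { tiles : tileset ; seed : fasm ; temp : nat }.

Definition valid_system (Y : system) : Prop :=
  (1 <= temp Y)%nat /\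
  is_assembly (fasm_fun (seed Y)) /\
  over (tiles Y) (fasm_fun (seed Y)) /\
  stable (temp Y) (fasm_fun (seed Y)).

Definition step (Y : system) (a b : asm) : Prop :=
  exists p t, In t (tiles Y) /\ a p = None /\ b p = Some t /\
    (forall q, q <> p -> b q = a q) /\
    is_assembly b /\ stable (temp Y) b.

(** [a] produces [b] in S: there is a finite or infinite assembly sequence
    starting at [a] (modelled as an infinite sequence in which each step
    is either a single tile addition or a stutter) whose result (limit) is [b]. *)
Definition produces (Y : system) (a b : asm) : Prop :=
  exists f : nat -> asm,
    aeq (f 0%nat) a /\
    (forall i, aeq (f (S i)) (f i) \/ step Y (f i) (f (S i))) /\
    (forall x t, b x = Some t <-> exists i, f i x = Some t).

Definition producible (Y : system) (a : asm) : Prop :=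
  produces Y (fasm_fun (seed Y)) a.

Definition terminal (Y : system) (a : asm) : Prop :=
  producible Y a /\ ~ exists b, step Y a b.

Definition block : Type := list (option tile).

Definition block_over (U : tileset) (m : nat) (b : block) : Prop :=
  List.length b = m /\ forall t, In (Some t) b -> In t U.

Definition blk (m : nat) (a : asm) (x : Z) : block :=
  map (fun i => a (Z.of_nat m * x + Z.of_nat i)) (seq 0 m).

Definition block_le (b c : block) : Prop :=
  List.length b = List.length c /\
  forall i t, nth_error b i = Some (Some t) -> nth_error c i = Some (Some t).

Definition repfun : Type := block -> option tile.

Definition valid_rep (U T : tileset) (m : nat) (R : repfun) : Prop :=
  (forall b t, block_over U m b -> R b = Some t -> In t T) /\
  (forall b c t, block_over U m b -> block_over U m c -> block_le b c ->
     R b = Some t -> R c = Some t).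

Definition Rstar (m : nat) (R : repfun) (a : asm) : asm :=
  fun x => R (blk m a x).

Definition nonempty_block (m : nat) (a : asm) (x : Z) : Prop :=
  exists i, (i < m)%nat /\ a (Z.of_nat m * x + Z.of_nat i) <> None.

Definition maps_cleanly (m : nat) (R : repfun) (a : asm) : Prop :=
  (forall x, nonempty_block m a x ->
     exists y, Z.abs (y - x) <= 1 /\ Rstar m R a y <> None) \/
  (forall x y, nonempty_block m a x -> nonempty_block m a y -> x = y).

Definition simulates (Ssim T : system) (m : nat) (R : repfun) : Prop :=
  valid_rep (tiles Ssim) (tiles T) m R /\
  (forall a', producible Ssim a' -> producible T (Rstar m R a')) /\
  (forall a, producible T a -> exists a', producible Ssim a' /\ aeq (Rstar m R a') a) /\
  (forall a', terminal Ssim a' -> terminal T (Rstar m R a')) /\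
  (forall a, terminal T a -> exists a', terminal Ssim a' /\ aeq (Rstar m R a') a) /\
  (forall a', producible Ssim a' -> maps_cleanly m R a') /\
  (forall a' b', producible Ssim a' -> produces Ssim a' b' ->
     produces T (Rstar m R a') (Rstar m R b')) /\
  (forall a, producible T a ->
     exists Pi : asm -> Prop,
       (forall a', Pi a' -> producible Ssim a') /\
       (forall a', Pi a' -> aeq (Rstar m R a') a) /\
       (forall b, producible T b -> produces T a b ->
          (forall a', Pi a' -> exists b', produces Ssim a' b' /\ aeq (Rstar m R b') b) /\
          (forall a'' b', producible Ssim a'' -> produces Ssim a'' b' ->
             aeq (Rstar m R a'') a -> aeq (Rstar m R b') b ->
             exists a', Pi a' /\ produces Ssim a' a''))).

Definition reptable : Type := list (block * tile).

Definition opt_tile_eq_dec : forall a b : option tile, {a = b} + {a <> b}.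
Proof. decide equality; apply tile_eq_dec. Defined.

Definition block_eq_dec : forall b c : block, {b = c} + {b <> c}.
Proof. apply list_eq_dec, opt_tile_eq_dec. Defined.

Fixpoint table_fun (tb : reptable) (b : block) : option tile :=
  match tb with
  | [] => None
  | (k, t) :: tb' => if block_eq_dec k b then Some t else table_fun tb' b
  end.

Definition pair (a b : nat) : nat := Cantor.to_nat (a, b).

(** Partial recursive functions nat -/-> nat, in the unary formulation with
    Cantor pairing (zero, successor, identity, projections, composition,
    pairing, primitive recursion, unbounded minimisation). *)
Inductive prf : Type :=
| PZero | PSucc | PId | PFst | PSnd
| PComp (f g : prf)
| PPair (f g : prf)
| PRec (f g : prf)
| PMu (f : prf).

Inductive evalp : prf -> nat -> nat -> Prop :=
| ev_zero x : evalp PZero x 0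
| ev_succ x : evalp PSucc x (S x)
| ev_id x : evalp PId x x
| ev_fst a b : evalp PFst (pair a b) a
| ev_snd a b : evalp PSnd (pair a b) b
| ev_comp f g x y z : evalp g x y -> evalp f y z -> evalp (PComp f g) x z
| ev_pair f g x a b : evalp f x a -> evalp g x b -> evalp (PPair f g) x (pair a b)
| ev_rec0 f g x y : evalp f x y -> evalp (PRec f g) (pair x 0) y
| ev_recS f g x n y z : evalp (PRec f g) (pair x n) y ->
    evalp g (pair (pair x n) y) z -> evalp (PRec f g) (pair x (S n)) z
| ev_mu f x n : evalp f (pair x n) 0 ->
    (forall k, (k < n)%nat -> exists v, v <> 0%nat /\ evalp f (pair x k) v) ->
    evalp (PMu f) x n.

Definition computable {A B : Type} (eA : A -> nat) (eB : B -> nat) (f : A -> B) : Prop :=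
  exists c : prf, forall a, evalp c (eA a) (eB (f a)).

Fixpoint enc_list {A : Type} (e : A -> nat) (l : list A) : nat :=
  match l with
  | [] => 0
  | x :: l' => S (pair (e x) (enc_list e l'))
  end.

Fixpoint enc_string (s : string) : nat :=
  match s with
  | EmptyString => 0
  | String c s' => S (pair (nat_of_ascii c) (enc_string s'))
  end.

Definition enc_Z (z : Z) : nat :=
  if Z_le_dec 0 z then (2 * Z.to_nat z)%nat else (2 * Z.to_nat (- z) - 1)%nat.

Definition enc_glue (g : glue) : nat := pair (enc_string (fst g)) (snd g).

Definition enc_tile (t : tile) : nat := pair (enc_glue (west t)) (enc_glue (east t)).

Definition enc_opt_tile (o : option tile) : nat :=
  match o with None => 0 | Some t => S (enc_tile t) end.

Definition enc_fasm (l : fasm) : nat :=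
  enc_list (fun pt => pair (enc_Z (fst pt)) (enc_tile (snd pt))) l.

Definition enc_system (Y : system) : nat :=
  pair (enc_list enc_tile (tiles Y)) (pair (enc_fasm (seed Y)) (temp Y)).

Definition enc_reptable (tb : reptable) : nat :=
  enc_list (fun bt => pair (enc_list enc_opt_tile (fst bt)) (enc_tile (snd bt))) tb.

(* Suppose a single tile set U simulates every system, and take the counter
   system whose tiles 0, ..., n can only attach in this order to the right of
   the seed tile 0, with n >= 2|U| + 3.  In one dimension the producible
   assemblies are exactly the stable extensions of the seed.  If a producible
   assembly of the simulator repeated a tile type at two positions of a
   segment free of seed tiles, the part between the repetitions could be
   pumped forever, giving an unbounded producible assembly; this is
   impossible, since that assembly would have to map cleanly onto a producible
   assembly of the counter, which lives in [0, n].  So every seed-free segment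
   of non-empty positions is shorter than |U|.  But by monotonicity of the
   representation function the seed itself represents nothing outside 0, so
   an assembly representing the full counter line needs non-seed tiles in each
   of the blocks 1, ..., n; three of them, in blocks |U| + 1 apart, are
   separated by two long segments, one of which avoids the seed. *)

From Stdlib Require Import ZArith List String Lia Classical.
Import ListNotations.
Open Scope Z_scope.

Definition subasm (a b : asm) : Prop := forall x t, a x = Some t -> b x = Some t.

Record wf_asm (V : tileset) (tau : nat) (a : asm) : Prop := {
  wf_over : over V a;
  wf_stable : stable tau a;
  wf_assembly : is_assembly a }.

Arguments wf_over {V tau a}.
Arguments wf_stable {V tau a}.
Arguments wf_assembly {V tau a}.

Definition bounded (a : asm) : Prop := exists K, forall x, a x <> None -> Z.abs x <= K.

Lemma wf_aeq V tau a b : aeq a b -> wf_asm V tau a -> wf_asm V tau b.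
Proof.
  intros E [Ho Hs [[x0 Hx0] Hc]]; split.
  - intros x t H; rewrite <- E in H; eauto.
  - intros x l r Hl Hr; rewrite <- E in Hl, Hr; eauto.
  - split; [exists x0; now rewrite <- E|].
    intros x y z Hxyz Hx Hz; rewrite <- E in *; eauto.
Qed.

Lemma step_subasm Y a b : step Y a b -> subasm a b.
Proof.
  intros [p [t [_ [Hp [_ [Ho _]]]]]] x u Hx.
  destruct (Z.eq_dec x p) as [->|Hxp]; [congruence|now rewrite Ho].
Qed.

Lemma step_wf Y a b : step Y a b -> over (tiles Y) a -> wf_asm (tiles Y) (temp Y) b.
Proof.
  intros [p [t [Ht [_ [Hbp [Ho [Hb Hs]]]]]]] Ha; split; auto.
  intros x u Hx. destruct (Z.eq_dec x p) as [->|Hxp].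
  - rewrite Hbp in Hx. now injection Hx as <-.
  - rewrite Ho in Hx by exact Hxp. eauto.
Qed.

Lemma produces_wf Y a b : wf_asm (tiles Y) (temp Y) a -> produces Y a b ->
  wf_asm (tiles Y) (temp Y) b /\ subasm a b.
Proof.
  intros Wa [f [Hf0 [Hfs Hlim]]].
  assert (Hmono : forall i j, (i <= j)%nat -> subasm (f i) (f j)).
  { intros i j Hij; induction Hij as [|j _ IH]; intros x t Hx; [exact Hx|].
    destruct (Hfs j) as [E|E]; [rewrite E|apply (step_subasm _ _ _ E)]; auto. }
  assert (Wf : forall i, wf_asm (tiles Y) (temp Y) (f i)).
  { induction i as [|i IH].
    - apply (wf_aeq _ _ a); [intro; now rewrite Hf0|exact Wa].
    - destruct (Hfs i) as [E|E].
      + apply (wf_aeq _ _ (f i)); [intro; now rewrite E|exact IH].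
      + exact (step_wf _ _ _ E (wf_over IH)). }
  assert (Hsub : forall i, subasm (f i) b) by (intros i x t Hx; apply Hlim; eauto).
  assert (Hab : subasm a b) by (intros x t Hx; apply (Hsub 0%nat); now rewrite Hf0).
  assert (Htwo : forall x y t u, b x = Some t -> b y = Some u ->
                 exists k, f k x = Some t /\ f k y = Some u).
  { intros x y t u Hx Hy. apply Hlim in Hx as [i Hi]. apply Hlim in Hy as [j Hj].
    exists (Nat.max i j); split; [apply (Hmono i)|apply (Hmono j)]; auto; lia. }
  split; [split|exact Hab].
  - intros x t Hx. apply Hlim in Hx as [i Hi]. exact (wf_over (Wf i) x t Hi).
  - intros x l r Hl Hr. destruct (Htwo _ _ _ _ Hl Hr) as [k [Hk1 Hk2]].
    exact (wf_stable (Wf k) x l r Hk1 Hk2).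
  - destruct (wf_assembly Wa) as [[x0 Hx0] _]. split.
    + exists x0. destruct (a x0) eqn:E; [now rewrite (Hab _ _ E)|congruence].
    + intros x y z Hxyz Hx Hz.
      destruct (b x) as [t|] eqn:Ex; [|congruence].
      destruct (b z) as [u|] eqn:Ez; [|congruence].
      destruct (Htwo _ _ _ _ Ex Ez) as [k [Hk1 Hk2]].
      destruct (f k y) as [v|] eqn:Ey; [now rewrite (Hsub _ _ _ Ey)|].
      exfalso. apply (proj2 (wf_assembly (Wf k)) x y z); congruence.
Qed.

Definition defined (a : asm) (x : Z) : bool := if a x then true else false.

Definition restrict (a : asm) (D : Z -> bool) : asm := fun x => if D x then a x else None.

Definition convex (D : Z -> bool) : Prop :=
  forall x y z, x <= y <= z -> D x = true -> D z = true -> D y = true.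

Lemma convex_union D E p : convex D -> convex E -> D p = true -> E p = true ->
  convex (fun x => orb (D x) (E x)).
Proof.
  intros HD HE Dp Ep x y z Hxyz Hx Hz. apply Bool.orb_true_iff.
  destruct (Z_le_gt_dec y p).
  - apply Bool.orb_true_iff in Hx as [Hx|Hx];
      [left; apply (HD x y p)|right; apply (HE x y p)]; auto; lia.
  - apply Bool.orb_true_iff in Hz as [Hz|Hz];
      [left; apply (HD p y z)|right; apply (HE p y z)]; auto; lia.
Qed.

Lemma restrict_wf V tau a D : wf_asm V tau a -> convex D ->
  (exists x, D x = true /\ a x <> None) -> wf_asm V tau (restrict a D).
Proof.
  unfold restrict. intros [Ho Hs [_ Hc]] HD [x0 [Dx0 Hx0]]. split.
  - intros x t Hx. destruct (D x); [eauto|discriminate].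
  - intros x l r Hl Hr. destruct (D x), (D (x + 1)); try discriminate; eauto.
  - split; [exists x0; now rewrite Dx0|].
    intros x y z Hxyz Hx Hz.
    destruct (D x) eqn:Dx; [|congruence]. destruct (D z) eqn:Dz; [|congruence].
    rewrite (HD x y z); eauto.
Qed.

Lemma restrict_grow Y a D E :
  (forall x, D x = true -> E x = true) ->
  (forall x y, E x = true -> D x = false -> E y = true -> D y = false -> x = y) ->
  wf_asm (tiles Y) (temp Y) (restrict a E) ->
  aeq (restrict a E) (restrict a D) \/ step Y (restrict a D) (restrict a E).
Proof.
  intros DE Huniq [Ho Hs Ha].
  destruct (classic (exists p, E p = true /\ D p = false /\ a p <> None))
    as [[p [Ep [Dp Hp]]]|Hnone].
  - right. destruct (a p) as [t|] eqn:Hap; [|congruence].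
    assert (HEp : restrict a E p = Some t) by (unfold restrict; now rewrite Ep).
    exists p, t. split; [|split; [|split; [|split; [|split]]]]; auto.
    + exact (Ho p t HEp).
    + unfold restrict; now rewrite Dp.
    + intros q Hq. unfold restrict.
      destruct (D q) eqn:Dq; [now rewrite (DE q Dq)|].
      destruct (E q) eqn:Eq; auto. now destruct Hq; apply (Huniq q p).
  - left. intro x. unfold restrict.
    destruct (D x) eqn:Dx; [now rewrite (DE x Dx)|].
    destruct (E x) eqn:Ex; auto.
    destruct (a x) eqn:Hax; auto.
    exfalso; apply Hnone; exists x; repeat split; congruence.
Qed.

(* The interval [s0 - (i + 1) / 2, s0 + i / 2]: one more position per step. *)
Definition window (s0 : Z) (i : nat) (x : Z) : bool :=
  andb (2 * (x - s0) <=? Z.of_nat i) (2 * (s0 - x) <=? Z.of_nat i + 1).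

Lemma windowP s0 i x :
  window s0 i x = true <-> 2 * (x - s0) <= Z.of_nat i /\ 2 * (s0 - x) <= Z.of_nat i + 1.
Proof. unfold window. now rewrite Bool.andb_true_iff, !Z.leb_le. Qed.

Lemma window_false s0 i x :
  window s0 i x = false <-> ~ (2 * (x - s0) <= Z.of_nat i /\ 2 * (s0 - x) <= Z.of_nat i + 1).
Proof. now rewrite <- windowP, Bool.not_true_iff_false. Qed.

Lemma window_convex s0 i : convex (window s0 i).
Proof. intros x y z Hxyz. rewrite !windowP. lia. Qed.

Lemma window_new_unique s0 i x y :
  window s0 (S i) x = true -> window s0 i x = false ->
  window s0 (S i) y = true -> window s0 i y = false -> x = y.
Proof. rewrite !windowP, !window_false. lia. Qed.

(* The seed grows outward one position at a time, alternately to the left and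
   to the right, so every stable extension of it is reached. *)
Lemma producible_of_wf Y b : is_assembly (fasm_fun (seed Y)) ->
  wf_asm (tiles Y) (temp Y) b -> subasm (fasm_fun (seed Y)) b -> producible Y b.
Proof.
  set (sg := fasm_fun (seed Y)). intros [[s0 Hs0] Hsc] Wb Hsub.
  set (D := fun i x => orb (defined sg x) (window s0 i x)).
  assert (Hsg : convex (defined sg)).
  { intros x y z Hxyz. unfold defined.
    destruct (sg x) eqn:Ex, (sg z) eqn:Ez, (sg y) eqn:Ey; auto;
      exfalso; apply (Hsc x y z); congruence. }
  assert (Hs0' : defined sg s0 = true) by (unfold defined; now destruct (sg s0)).
  exists (fun i => restrict b (D i)). split; [|split].
  - intro x. change (restrict b (D 0%nat) x = sg x). unfold restrict, D, defined.
    destruct (sg x) eqn:Ex; [exact (Hsub _ _ Ex)|].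
    destruct (window s0 0 x) eqn:W; auto.
    apply windowP in W. replace x with s0 in Ex by lia. congruence.
  - intro i. apply restrict_grow.
    + intros x. unfold D. rewrite !Bool.orb_true_iff, !windowP.
      intros [Hx|Hx]; [now left|right; lia].
    + intros x y. unfold D. rewrite !Bool.orb_true_iff, !Bool.orb_false_iff.
      intros [Hx|Hx] [Hx1 Hx2] [Hy|Hy] [Hy1 Hy2]; try congruence.
      exact (window_new_unique s0 i x y Hx Hx2 Hy Hy2).
    + apply restrict_wf; auto.
      * apply (convex_union _ _ s0); auto using window_convex. apply windowP; lia.
      * exists s0. unfold D. rewrite Hs0'. split; auto.
        destruct (sg s0) eqn:E; [now rewrite (Hsub _ _ E)|congruence].
  - intros x t; split.
    + intro Hx. exists (Z.to_nat (2 * Z.abs (x - s0))). unfold restrict, D.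
      replace (window s0 _ x) with true; [now rewrite Bool.orb_true_r|].
      symmetry. apply windowP. lia.
    + intros [i Hi]. unfold restrict in Hi. now destruct (D i x).
Qed.

Lemma producibleP Y b : valid_system Y ->
  producible Y b <-> wf_asm (tiles Y) (temp Y) b /\ subasm (fasm_fun (seed Y)) b.
Proof.
  intros [_ [Ha [Ho Hs]]]. split.
  - apply produces_wf. now split.
  - intros [Wb Hsub]. now apply producible_of_wf.
Qed.

Lemma seed_producible Y : valid_system Y -> producible Y (fasm_fun (seed Y)).
Proof.
  intros HY. apply producibleP; auto.
  destruct HY as [_ [Ha [Ho Hs]]]. split; [now split|]. intros x t Hx; exact Hx.
Qed.

(* Folds every position right of [y1] periodically onto (y1, y2]. *)
Definition wrap (y1 y2 x : Z) : Z :=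
  if x <=? y1 then x else y1 + 1 + (x - y1 - 1) mod (y2 - y1).

Lemma wrap_below y1 y2 x : x <= y1 -> wrap y1 y2 x = x.
Proof. unfold wrap. destruct (Z.leb_spec x y1); lia. Qed.

Lemma wrap_range y1 y2 x : y1 < y2 -> y1 < x -> y1 < wrap y1 y2 x <= y2.
Proof. unfold wrap. destruct (Z.leb_spec x y1); [lia|]. intros. Z.div_mod_to_equations. lia. Qed.

Lemma wrap_succ y1 y2 x : y1 < y2 ->
  wrap y1 y2 (x + 1) = wrap y1 y2 x + 1 \/ (wrap y1 y2 x = y2 /\ wrap y1 y2 (x + 1) = y1 + 1).
Proof.
  unfold wrap. intro Hy.
  destruct (Z.leb_spec x y1), (Z.leb_spec (x + 1) y1); try lia.
  - left. replace (x + 1 - y1 - 1) with 0 by lia. rewrite Z.mod_0_l; lia.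
  - replace (x + 1 - y1 - 1) with (x - y1 - 1 + 1) by lia.
    set (u := x - y1 - 1). set (d := y2 - y1).
    pose proof (Z.div_mod u d ltac:(lia)). pose proof (Z.mod_pos_bound u d ltac:(lia)).
    destruct (Z_lt_ge_dec (u mod d + 1) d).
    + left. rewrite <- (Z.mod_unique (u + 1) d (u / d) (u mod d + 1)); lia.
    + right. rewrite <- (Z.mod_unique (u + 1) d (u / d + 1) 0); lia.
Qed.

Lemma periodic_extension V tau a y1 y2 :
  wf_asm V tau a -> y1 < y2 -> a y1 <> None -> a y1 = a y2 ->
  exists b, wf_asm V tau b /\ (forall x, x <= y1 -> b x = a x) /\
            (forall x, y1 < x -> b x <> None).
Proof.
  intros [Ho Hs [_ Hc]] Hy Ha1 Ha12.
  assert (Hin : forall z, y1 <= z <= y2 -> a z <> None)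
    by (intros z Hz; apply (Hc y1 z y2); congruence).
  assert (Hfar : forall x, y1 < x -> a (wrap y1 y2 x) <> None)
    by (intros x Hx; apply Hin; pose proof (wrap_range y1 y2 x); lia).
  exists (fun x => a (wrap y1 y2 x)). split; [split|split].
  - intros x t Hx. eauto.
  - intros x l r Hl Hr.
    destruct (wrap_succ y1 y2 x Hy) as [E|[E1 E2]]; rewrite ?E, ?E1, ?E2 in *; eauto.
    rewrite <- Ha12 in Hl. eauto.
  - split; [exists (y1 + 1); apply Hfar; lia|].
    intros x y z Hxyz Hx Hz.
    destruct (Z_le_gt_dec y y1) as [Hy1|]; [|apply Hfar; lia].
    rewrite wrap_below in * by lia.
    destruct (Z_le_gt_dec z y1).
    + rewrite wrap_below in Hz by lia. eauto.
    + apply (Hc x y y1); auto; lia.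
  - intros x Hx. now rewrite wrap_below.
  - exact Hfar.
Qed.

Lemma no_repeat_right V tau sg a z1 z2 :
  wf_asm V tau a -> subasm sg a ->
  (forall b, wf_asm V tau b -> subasm sg b -> bounded b) ->
  (forall x, sg x <> None -> x < z1) ->
  z1 < z2 -> a z1 <> None -> a z1 <> a z2.
Proof.
  intros Wa Hsub Hbd Hleft Hz Ha1 E.
  destruct (periodic_extension V tau a z1 z2 Wa Hz Ha1 E) as [b [Wb [Hagree Hray]]].
  assert (Hsb : subasm sg b).
  { intros x t Hx. rewrite Hagree; [now apply Hsub|]. apply Z.lt_le_incl, Hleft. congruence. }
  destruct (Hbd b Wb Hsb) as [K HK].
  assert (Hfar : z1 < Z.abs K + Z.abs z1 + 1) by lia.
  specialize (HK _ (Hray _ Hfar)). lia.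
Qed.

Definition flip (t : tile) : tile := Tile (east t) (west t).

Definition mirror (a : asm) : asm := fun x => option_map flip (a (- x)).

Lemma flip_involutive t : flip (flip t) = t.
Proof. now destruct t. Qed.

Lemma map_flip_involutive V : map flip (map flip V) = V.
Proof. rewrite map_map. rewrite (map_ext _ id) by exact flip_involutive. apply map_id. Qed.

Lemma mirror_involutive a x : mirror (mirror a) x = a x.
Proof.
  unfold mirror. rewrite Z.opp_involutive.
  destruct (a x); simpl; now rewrite ?flip_involutive.
Qed.

Lemma mirror_none a x : mirror a x = None <-> a (- x) = None.
Proof. unfold mirror. destruct (a (- x)); simpl; split; congruence. Qed.

Lemma mirror_some a x t : mirror a x = Some t -> a (- x) = Some (flip t).
Proof.
  unfold mirror. destruct (a (- x)); simpl; intro H; [|discriminate].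
  injection H as <-. now rewrite flip_involutive.
Qed.

Lemma istrength_flip l r : istrength (flip l) (flip r) = istrength r l.
Proof.
  unfold istrength, flip; simpl.
  destruct (glue_eq_dec (west l) (east r)), (glue_eq_dec (east r) (west l)); congruence.
Qed.

Lemma mirror_wf V tau a : wf_asm V tau a -> wf_asm (map flip V) tau (mirror a).
Proof.
  intros [Ho Hs [[x0 Hx0] Hc]]. split.
  - intros x t Hx. apply mirror_some, Ho in Hx.
    rewrite <- (flip_involutive t). now apply in_map.
  - intros x l r Hl Hr. apply mirror_some in Hl, Hr.
    replace (- (x + 1)) with (- x - 1) in Hr by lia.
    rewrite <- (flip_involutive l), <- (flip_involutive r), istrength_flip.
    apply (Hs (- x - 1)); [exact Hr|now replace (- x - 1 + 1) with (- x) by lia].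
  - split; [exists (- x0); rewrite mirror_none, Z.opp_involutive; exact Hx0|].
    intros x y z Hxyz. rewrite !mirror_none. intros Hx Hz.
    apply (Hc (- z) (- y) (- x)); auto; lia.
Qed.

Lemma mirror_subasm a b : subasm a b -> subasm (mirror a) (mirror b).
Proof.
  intros H x t Hx. unfold mirror in *.
  destruct (a (- x)) eqn:E; [|discriminate]. now rewrite (H _ _ E).
Qed.

Lemma no_repeat_left V tau sg a z1 z2 :
  wf_asm V tau a -> subasm sg a ->
  (forall b, wf_asm V tau b -> subasm sg b -> bounded b) ->
  (forall x, sg x <> None -> z2 < x) ->
  z1 < z2 -> a z2 <> None -> a z1 <> a z2.
Proof.
  intros Wa Hsub Hbd Hright Hz Ha2 E.
  apply (no_repeat_right (map flip V) tau (mirror sg) (mirror a) (- z2) (- z1)).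
  - now apply mirror_wf.
  - now apply mirror_subasm.
  - intros b Wb Hsb. destruct (Hbd (mirror b)) as [K HK].
    + rewrite <- (map_flip_involutive V). now apply mirror_wf.
    + intros x t Hx. apply (mirror_subasm _ _ Hsb). now rewrite mirror_involutive.
    + exists K. intros x Hx. rewrite <- (Z.abs_opp x). apply HK.
      now rewrite mirror_none, Z.opp_involutive.
  - intros x Hx. rewrite mirror_none in Hx. apply Hright in Hx. lia.
  - lia.
  - now rewrite mirror_none, Z.opp_involutive.
  - unfold mirror. now rewrite !Z.opp_involutive, E.
Qed.

Lemma injective_interval_short {A : Type} (l : list A) (f : Z -> A) y1 y2 :
  (forall z, y1 <= z <= y2 -> In (f z) l) ->
  (forall z1 z2, y1 <= z1 -> z1 < z2 -> z2 <= y2 -> f z1 <> f z2) ->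
  y2 - y1 < Z.of_nat (List.length l).
Proof.
  intros Hin Hinj. destruct (Z_lt_ge_dec y2 y1) as [|Hle]; [lia|].
  set (g := fun k : nat => f (y1 + Z.of_nat k)).
  set (ks := seq 0 (S (Z.to_nat (y2 - y1)))).
  assert (Hnd : NoDup (map g ks)).
  { apply NoDup_map_NoDup_ForallPairs; [|apply seq_NoDup].
    intros k1 k2 H1 H2 E. apply in_seq in H1, H2. unfold g in E.
    destruct (Nat.lt_total k1 k2) as [L|[L|L]]; auto; exfalso.
    - apply (Hinj (y1 + Z.of_nat k1) (y1 + Z.of_nat k2)); auto; lia.
    - apply (Hinj (y1 + Z.of_nat k2) (y1 + Z.of_nat k1)); auto; lia. }
  assert (Hincl : incl (map g ks) l).
  { intros u Hu. apply in_map_iff in Hu as [k [<- Hk]]. apply in_seq in Hk. apply Hin. lia. }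
  pose proof (NoDup_incl_length Hnd Hincl) as Hlen.
  unfold ks in Hlen. rewrite length_map, length_seq in Hlen. lia.
Qed.

Lemma seed_free_segment_short V tau sg a y1 y2 :
  is_assembly sg -> wf_asm V tau a -> subasm sg a ->
  (forall b, wf_asm V tau b -> subasm sg b -> bounded b) ->
  (forall z, y1 <= z <= y2 -> sg z = None) -> a y1 <> None -> a y2 <> None ->
  y2 - y1 < Z.of_nat (List.length V).
Proof.
  intros [[s0 Hs0] Hsc] Wa Hsub Hbd Hfree Ha1 Ha2.
  assert (Hin : forall z, y1 <= z <= y2 -> a z <> None)
    by (intros z Hz; exact (proj2 (wf_assembly Wa) y1 z y2 Hz Ha1 Ha2)).
  rewrite <- (length_map Some V).
  apply (injective_interval_short _ a).
  { intros z Hz. destruct (a z) as [t|] eqn:E; [|now destruct (Hin z Hz)].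
    apply in_map, (wf_over Wa z t E). }
  assert (Hs0' : s0 < y1 \/ y2 < s0).
  { destruct (Z_lt_ge_dec s0 y1); [now left|right].
    destruct (Z_le_gt_dec s0 y2); [|lia]. exfalso. apply Hs0, Hfree. lia. }
  intros z1 z2 Hz1 Hz Hz2. destruct Hs0' as [Hleft|Hright].
  - apply (no_repeat_right V tau sg); auto; [|apply Hin; lia].
    intros x Hx. destruct (Z_lt_ge_dec x y1); [lia|exfalso].
    destruct (Z_le_gt_dec x y2); [apply Hx, Hfree; lia|].
    apply (Hsc s0 y1 x); auto; [lia|]. apply Hfree; lia.
  - apply (no_repeat_left V tau sg); auto; [|apply Hin; lia].
    intros x Hx. destruct (Z_lt_ge_dec y2 x); [lia|exfalso].
    destruct (Z_le_gt_dec y1 x); [apply Hx, Hfree; lia|].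
    apply (Hsc x y2 s0); auto; [lia|]. apply Hfree; lia.
Qed.

Lemma blk_over U m a x : over U a -> block_over U m (blk m a x).
Proof.
  intro H. unfold blk. split; [now rewrite length_map, length_seq|].
  intros t Ht. apply in_map_iff in Ht as [i [E _]]. eauto.
Qed.

Lemma blk_le m a b x : subasm a b -> block_le (blk m a x) (blk m b x).
Proof.
  intro H. unfold blk. split; [now rewrite !length_map|].
  intros i t Hi. rewrite nth_error_map in *.
  destruct (nth_error (seq 0 m) i); simpl in *; [|discriminate].
  injection Hi as Hi. now rewrite (H _ _ Hi).
Qed.

Lemma Rstar_subasm U T m R a b x t : valid_rep U T m R -> over U a -> over U b ->
  subasm a b -> Rstar m R a x = Some t -> Rstar m R b x = Some t.
Proof. intros [_ Hmono] Ha Hb Hab. apply Hmono; auto using blk_over, blk_le. Qed.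

Lemma nonempty_block_div m a x : (0 < m)%nat -> a x <> None ->
  nonempty_block m a (x / Z.of_nat m).
Proof.
  intros Hm Hx. exists (Z.to_nat (x mod Z.of_nat m)).
  pose proof (Z.mod_pos_bound x (Z.of_nat m) ltac:(lia)).
  split; [lia|]. rewrite Z2Nat.id, <- Z.div_mod by lia. exact Hx.
Qed.

Lemma abs_le_block m x : (0 < m)%nat ->
  Z.abs x <= Z.of_nat m * (Z.abs (x / Z.of_nat m) + 1).
Proof. intro Hm. Z.div_mod_to_equations. nia. Qed.

Definition ctile (k : nat) : tile := Tile ("a"%string, k) ("a"%string, S k).

Definition counter (n : nat) : system := Sys (map ctile (seq 0 (S n))) [(0, ctile 0)] 1.

Definition counter_full (n : nat) : asm := fun x =>
  if andb (0 <=? x) (x <=? Z.of_nat n) then Some (ctile (Z.to_nat x)) else None.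

Lemma counter_seed n x :
  fasm_fun (seed (counter n)) x = if Z.eq_dec 0 x then Some (ctile 0) else None.
Proof. reflexivity. Qed.

Lemma in_counter_tiles n t : In t (tiles (counter n)) <-> exists j, t = ctile j /\ (j <= n)%nat.
Proof.
  unfold counter, tiles. rewrite in_map_iff. split.
  - intros [j [<- Hj]]. apply in_seq in Hj. exists j; split; [easy|lia].
  - intros [j [-> Hj]]. exists j; split; [easy|]. apply in_seq. lia.
Qed.

Lemma ctile_strength k j : (1 <= istrength (ctile k) (ctile j))%nat -> j = S k.
Proof.
  unfold istrength. destruct (glue_eq_dec (east (ctile k)) (west (ctile j))) as [E|E].
  - now injection E.
  - lia.
Qed.

Lemma counter_valid n : valid_system (counter n).
Proof.
  split; [simpl; lia|split; [split|split]].
  - exists 0. rewrite counter_seed. destruct (Z.eq_dec 0 0); congruence.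
  - intros x y z Hxyz. rewrite !counter_seed.
    destruct (Z.eq_dec 0 x), (Z.eq_dec 0 y), (Z.eq_dec 0 z); congruence || lia.
  - intros x t. rewrite counter_seed. destruct (Z.eq_dec 0 x); [|discriminate].
    intros [= <-]. apply in_counter_tiles. exists 0%nat; split; [easy|lia].
  - intros x l r. rewrite !counter_seed.
    destruct (Z.eq_dec 0 x), (Z.eq_dec 0 (x + 1)); congruence || lia.
Qed.

Lemma counter_full_producible n : producible (counter n) (counter_full n).
Proof.
  apply producibleP; [apply counter_valid|]. unfold counter_full. split; [split|].
  - intros x t. destruct (Z.leb_spec 0 x), (Z.leb_spec x (Z.of_nat n)); simpl;
      try discriminate. intros [= <-].
    apply in_counter_tiles. exists (Z.to_nat x). split; [easy|lia].
  - intros x l r. destruct (Z.leb_spec 0 x), (Z.leb_spec x (Z.of_nat n)); simpl;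
      try discriminate.
    destruct (Z.leb_spec 0 (x + 1)), (Z.leb_spec (x + 1) (Z.of_nat n)); simpl;
      try discriminate.
    intros [= <-] [= <-]. replace (Z.to_nat (x + 1)) with (S (Z.to_nat x)) by lia.
    unfold istrength. destruct glue_eq_dec as [_|E]; [simpl; lia|now destruct E].
  - split; [exists 0; destruct (Z.leb_spec 0 (Z.of_nat n)); simpl; [easy|lia]|].
    intros x y z Hxyz.
    destruct (Z.leb_spec 0 x), (Z.leb_spec x (Z.of_nat n)), (Z.leb_spec 0 z),
      (Z.leb_spec z (Z.of_nat n)), (Z.leb_spec 0 y), (Z.leb_spec y (Z.of_nat n));
      simpl; congruence || lia.
  - intros x t. rewrite counter_seed. destruct (Z.eq_dec 0 x) as [<-|]; [|discriminate].
    intros [= <-]. destruct (Z.leb_spec 0 (Z.of_nat n)); [reflexivity|lia].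
Qed.

Lemma counter_wf_shape n b : wf_asm (tiles (counter n)) 1 b -> b 0 = Some (ctile 0) ->
  forall x t, b x = Some t -> 0 <= x /\ t = ctile (Z.to_nat x).
Proof.
  intros [Ho Hs [_ Hc]] H0.
  assert (Hneg : b (-1) = None).
  { destruct (b (-1)) as [t|] eqn:E; auto.
    destruct (proj1 (in_counter_tiles n t) (Ho _ _ E)) as [j [-> _]].
    pose proof (ctile_strength j 0 (Hs (-1) _ _ E H0)). discriminate. }
  assert (Hnat : forall k t, b (Z.of_nat k) = Some t -> t = ctile k).
  { induction k as [|k IH]; intros t Ht; [simpl in Ht; congruence|].
    destruct (b (Z.of_nat k)) as [u|] eqn:Hk.
    - destruct (proj1 (in_counter_tiles n t) (Ho _ _ Ht)) as [j [-> _]].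
      rewrite Nat2Z.inj_succ in Ht. rewrite (IH u eq_refl) in Hk.
      now rewrite (ctile_strength k j (Hs _ _ _ Hk Ht)).
    - exfalso. apply (Hc 0 (Z.of_nat k) (Z.of_nat (S k))); [lia|congruence..]. }
  intros x t Hx. destruct (Z_lt_ge_dec x 0).
  - exfalso. apply (Hc x (-1) 0); [lia|congruence..].
  - split; [lia|]. apply Hnat. now rewrite Z2Nat.id by lia.
Qed.

Lemma counter_producible_bound n b x :
  producible (counter n) b -> b x <> None -> 0 <= x <= Z.of_nat n.
Proof.
  intros Pb Hx. apply (producibleP _ _ (counter_valid n)) in Pb as [Wb Hsub].
  assert (H0 : b 0 = Some (ctile 0)) by (apply Hsub; now rewrite counter_seed).
  destruct (b x) as [t|] eqn:E; [|congruence].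
  destruct (counter_wf_shape n b Wb H0 x t E) as [Hx0 ->].
  destruct (proj1 (in_counter_tiles n _) (wf_over Wb x _ E)) as [j [Ej Hj]].
  injection Ej as Ej. lia.
Qed.

Section CounterSimulation.

Variables (U : tileset) (sg : fasm) (tau n m : nat) (R : repfun).

Local Notation simulator := (Sys U sg tau).

Hypothesis HS : valid_system simulator.
Hypothesis Hsim : simulates simulator (counter n) m R.

Lemma simulator_producibleP b : producible simulator b <-> wf_asm U tau b /\ subasm (fasm_fun sg) b.
Proof. exact (producibleP simulator b HS). Qed.

Lemma simulated_image_in_counter b x :
  producible simulator b -> Rstar m R b x <> None -> 0 <= x <= Z.of_nat n.
Proof.
  destruct Hsim as [_ [Himage _]]. intros Pb. apply counter_producible_bound, Himage, Pb.
Qed.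

Lemma counter_realised c :
  producible (counter n) c -> exists b, producible simulator b /\ aeq (Rstar m R b) c.
Proof. destruct Hsim as [_ [_ [Honto _]]]. exact (Honto c). Qed.

Lemma scale_pos : (0 < m)%nat.
Proof.
  destruct (counter_realised _ (counter_full_producible n)) as [a [_ Ea]].
  destruct (Nat.eq_dec m 0) as [Hm|]; [exfalso|lia].
  assert (Hblk : blk m a 0 = blk m a (-1)) by (unfold blk; now rewrite Hm).
  pose proof (Ea 0) as E0. pose proof (Ea (-1)) as E1. unfold Rstar in E0, E1.
  rewrite Hblk, E1 in E0. unfold counter_full in E0. simpl in E0.
  destruct (Z.leb_spec 0 (Z.of_nat n)); [discriminate|lia].
Qed.

Lemma seed_image_at_origin x : Rstar m R (fasm_fun sg) x <> None -> x = 0.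
Proof.
  intros Hx. destruct (Rstar m R (fasm_fun sg) x) as [t|] eqn:E; [|congruence].
  destruct (counter_realised _ (seed_producible _ (counter_valid n))) as [a [Pa Ea]].
  apply simulator_producibleP in Pa as [Wa Hsub].
  destruct Hsim as [Hrep _]. destruct HS as [_ [_ [Hover _]]].
  pose proof (Rstar_subasm _ _ _ _ _ _ x t Hrep Hover (wf_over Wa) Hsub E) as Ha.
  rewrite Ea, counter_seed in Ha. now destruct (Z.eq_dec 0 x).
Qed.

Lemma simulator_bounded b : producible simulator b -> bounded b.
Proof.
  intros Pb. pose proof scale_pos as Hm.
  destruct Hsim as [_ [_ [_ [_ [_ [Hclean _]]]]]].
  destruct (Hclean b Pb) as [Hnear|Hone].
  - exists (Z.of_nat m * (Z.of_nat n + 2)). intros x Hx.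
    destruct (Hnear _ (nonempty_block_div m b x Hm Hx)) as [y [Hy Hry]].
    pose proof (simulated_image_in_counter b y Pb Hry). pose proof (abs_le_block m x Hm). nia.
  - destruct (classic (exists q, nonempty_block m b q)) as [[q Hq]|Hnone].
    + exists (Z.of_nat m * (Z.abs q + 1)). intros x Hx.
      rewrite (Hone q (x / Z.of_nat m) Hq (nonempty_block_div m b x Hm Hx)).
      exact (abs_le_block m x Hm).
    + exists 0. intros x Hx. exfalso. eauto using nonempty_block_div.
Qed.

Lemma fresh_in_block a x :
  producible simulator a -> aeq (Rstar m R a) (counter_full n) -> 1 <= x <= Z.of_nat n ->
  exists y, Z.of_nat m * x <= y < Z.of_nat m * x + Z.of_nat m /\
            fasm_fun sg y = None /\ a y <> None.
Proof.
  intros Pa Ea Hx. apply NNPP. intro Hno.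
  apply simulator_producibleP in Pa as [_ Hsub].
  assert (Hblk : blk m (fasm_fun sg) x = blk m a x).
  { unfold blk. apply map_ext_in. intros i Hi. apply in_seq in Hi.
    destruct (fasm_fun sg _) eqn:E; [symmetry; now apply Hsub|].
    destruct (a _) eqn:Ea'; [exfalso|reflexivity].
    apply Hno. exists (Z.of_nat m * x + Z.of_nat i). repeat split; [lia|lia|exact E|congruence]. }
  assert (Hsx : Rstar m R (fasm_fun sg) x <> None).
  { unfold Rstar. rewrite Hblk. fold (Rstar m R a x). rewrite Ea. unfold counter_full.
    destruct (Z.leb_spec 0 x), (Z.leb_spec x (Z.of_nat n)); simpl; congruence || lia. }
  pose proof (seed_image_at_origin x Hsx). lia.
Qed.

Lemma seed_free_segment_in_simulator a y1 y2 :
  producible simulator a -> (forall z, y1 <= z <= y2 -> fasm_fun sg z = None) ->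
  a y1 <> None -> a y2 <> None -> y2 - y1 < Z.of_nat (List.length U).
Proof.
  intros Pa. apply simulator_producibleP in Pa as [Wa Hsub].
  apply (seed_free_segment_short U tau (fasm_fun sg) a); auto; [apply HS|].
  intros b Wb Hb. now apply simulator_bounded, simulator_producibleP.
Qed.

Lemma counter_length_bound : (n < 2 * List.length U + 3)%nat.
Proof.
  destruct (Nat.lt_ge_cases n (2 * List.length U + 3)) as [|Hn]; [assumption|exfalso].
  set (N := Z.of_nat (List.length U)).
  pose proof scale_pos as Hm.
  destruct (counter_realised _ (counter_full_producible n)) as [a [Pa Ea]].
  destruct (fresh_in_block a 1 Pa Ea ltac:(lia)) as [y1 [Hy1 [S1 A1]]].
  destruct (fresh_in_block a (N + 2) Pa Ea ltac:(lia)) as [y2 [Hy2 [S2 A2]]].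
  destruct (fresh_in_block a (2 * N + 3) Pa Ea ltac:(lia)) as [y3 [Hy3 [S3 A3]]].
  assert (Hgap : N <= y2 - y1 /\ N <= y3 - y2) by nia.
  (* The seed is an interval missing y2, so it misses [y1, y2] or [y2, y3]. *)
  destruct (classic (forall z, y1 <= z <= y2 -> fasm_fun sg z = None)) as [Free|Hseed].
  - pose proof (seed_free_segment_in_simulator a y1 y2 Pa Free A1 A2). lia.
  - apply not_all_ex_not in Hseed as [z Hz]. apply imply_to_and in Hz as [Hz Hsz].
    assert (Free : forall w, y2 <= w <= y3 -> fasm_fun sg w = None).
    { destruct HS as [_ [[_ Hconvex] _]]. simpl in Hconvex.
      intros w Hw. destruct (fasm_fun sg w) eqn:Ew; [exfalso|reflexivity].
      apply (Hconvex z y2 w); [lia|assumption|congruence|assumption]. }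
    pose proof (seed_free_segment_in_simulator a y2 y3 Pa Free A2 A3). lia.
Qed.

End CounterSimulation.

Theorem mainTheorem6 :
  ~ exists (U : tileset) (tau' : nat)
           (Rf : system -> reptable) (Sf : system -> fasm),
      computable enc_system enc_reptable Rf /\
      computable enc_system enc_fasm Sf /\
      forall T : system, valid_system T ->
        valid_system (Sys U (Sf T) tau') /\
        exists m : nat, simulates (Sys U (Sf T) tau') T m (table_fun (Rf T)).
Proof.
  intros [U [tau' [Rf [Sf [_ [_ Huniv]]]]]].
  set (n := (2 * List.length U + 3)%nat).
  destruct (Huniv (counter n) (counter_valid n)) as [HS [m Hsim]].
  pose proof (counter_length_bound U (Sf (counter n)) tau' n m _ HS Hsim). lia.
Qed.
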